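(* Let $G$ be a finite simple graph with edge weight function $w$, and let $w_1(u)=0$ for all $u\in V(G)$. If the maximum degree $\Delta$ of $G$ is greater than $1$, then all roots of $\eta_{(w,w_1)}(G,x)$ lie in the interval $[-2b_0\sqrt{\Delta-1},\,2b_0\sqrt{\Delta-1}]$, where $b_0=\max_{e\in E(G)}|w(e)|$.
   Context: An edge weight function $w$ assigns a nonzero complex number to each edge; induced subgraphs carry restricted weights. For $A\subseteq E(G)$, $w(A)=\prod_{e\in A}w(e)$. $\mu_w(G,x)=\sum_{M}(-1)^{|M|}|w(M)|^2x^{n-2|M|}$ over all matchings $M$ (including empty), $n=|V(G)|$. $\eta_{(w,w_1)}(G,x)=\sum_{S\subseteq V(G)}(-1)^{|V(G)\setminus S|}\big(\prod_{v\in V(G)\setminus S}w_1(v)\big)\mu_w(G[S],x)$ with $G[S]$ the induced subgraph and $\mu_w$ of the empty graph equal to $1$. *)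

From mathcomp Require Import all_boot all_order all_algebra.
From mathcomp Require Export complex.
From mathcomp Require Export reals.
Set Implicit Arguments. Unset Strict Implicit. Unset Printing Implicit Defensive.
Import Order.TTheory GRing.Theory Num.Theory.
Local Open Scope ring_scope.

(* A finite simple graph on vertex type T is a symmetric irreflexive
   relation e : rel T.  Edges are 2-element vertex sets. *)
Definition edges (T : finType) (e : rel T) : {set {set T}} :=
  [set f : {set T} | [exists x, exists y, e x y && (f == [set x; y])]].

Definition edges_in (T : finType) (e : rel T) (S : {set T}) : {set {set T}} :=
  [set f in edges e | f \subset S].

Definition matching_in (T : finType) (e : rel T) (S : {set T})
  (M : {set {set T}}) : bool :=
  (M \subset edges_in e S) && trivIset M.

Definition deg (T : finType) (e : rel T) (v : T) : nat := #|[set u | e v u]|.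

Definition maxdeg (T : finType) (e : rel T) : nat := \max_(v : T) deg e v.

Definition mu_w (R : rcfType) (T : finType) (e : rel T) (w : {set T} -> R[i])
  (S : {set T}) : {poly R[i]} :=
  \sum_(M : {set {set T}} | matching_in e S M)
     ((-1) ^+ #|M| * `|\prod_(f in M) w f| ^+ 2) *: 'X^(#|S| - 2 * #|M|).

Definition eta_w (R : rcfType) (T : finType) (e : rel T) (w : {set T} -> R[i])
  (w1 : T -> R[i]) : {poly R[i]} :=
  \sum_(S : {set T})
     ((-1) ^+ #|~: S| * \prod_(v in ~: S) w1 v) *: mu_w e w S.

Definition b0 (R : rcfType) (T : finType) (e : rel T) (w : {set T} -> R[i]) : R :=
  \big[Num.max/0]_(f in edges e) Normc.normc (w f).

(* With w1 = 0 only the term S = V(G) of eta survives, so eta is the weighted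
   matching polynomial mu.  Deleting a vertex v gives the recurrence
     mu(S) = x mu(S - v) - sum_(u ~ v) |w(vu)|^2 mu(S - v - u),
   and everything follows from it.  For Im z <> 0 the ratios mu(S)/mu(S - v)
   at z have imaginary part of the sign of Im z and at least as large, so mu
   has no non-real root (Heilmann-Lieb).  For real x > 2c, c = b0 sqrt(D - 1),
   induction on |S| gives mu(S)(x) >= c mu(S - v)(x) > 0 whenever v has fewer
   than D neighbours in S, because then x - (D - 1) b0^2 / c >= c; negative x
   reduce to this case by mu(S)(-x) = (-1)^|S| mu(S)(x). *)

From mathcomp Require Import all_boot all_order all_algebra complex reals.
From mathcomp Require Import ring lra.
Set Implicit Arguments. Unset Strict Implicit. Unset Printing Implicit Defensive.
Import Order.TTheory GRing.Theory Num.Theory.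
Local Open Scope ring_scope.
Local Open Scope complex_scope.

Section MatchingPolynomial.
Variables (T : finType) (e : rel T).
Hypotheses (e_sym : symmetric e) (e_irr : irreflexive e).

Lemma edgesP f : reflect (exists x y, e x y /\ f = [set x; y]) (f \in edges e).
Proof.
rewrite inE; apply: (iffP existsP) => [[x /existsP[y /andP[exy /eqP ->]]]|].
  by exists x, y.
by case=> x [y [exy ->]]; exists x; apply/existsP; exists y; rewrite exy eqxx.
Qed.

Lemma neq_edge v u : e v u -> u != v.
Proof. by apply: contraTneq => ->; rewrite e_irr. Qed.

Lemma card_edge f : f \in edges e -> #|f| = 2%N.
Proof. by case/edgesP=> x [y [exy ->]]; rewrite cards2 eq_sym neq_edge. Qed.

Lemma mem_edges_in (S f : {set T}) :
  (f \in edges_in e S) = (f \in edges e) && (f \subset S).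
Proof. by rewrite inE. Qed.

Lemma cover_matching_in (S : {set T}) (M : {set {set T}}) :
  matching_in e S M -> cover M \subset S.
Proof.
case/andP=> /subsetP sM _; apply/subsetP => x /bigcupP[f /sM].
by rewrite mem_edges_in => /andP[_ /subsetP]; apply.
Qed.

Lemma card_matching_in (S : {set T}) (M : {set {set T}}) :
  matching_in e S M -> (2 * #|M| <= #|S|)%N.
Proof.
move=> mM; have := subset_leq_card (cover_matching_in mM).
case/andP: mM => /subsetP sM /eqP <-; rewrite mulnC -sum_nat_const.
rewrite (eq_bigr (fun _ => 2%N)) // => f /sM.
by rewrite mem_edges_in => /andP[/card_edge].
Qed.

Lemma matching_in_setD1 (S : {set T}) v (M : {set {set T}}) :
  v \in S ->
  matching_in e (S :\ v) M = matching_in e S M && (v \notin cover M).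
Proof.
move=> vS; rewrite /matching_in andbAC; congr (_ && _); apply/idP/idP.
  move=> /subsetP sM; apply/andP; split.
    apply/subsetP => f /sM; rewrite !mem_edges_in => /andP[-> /subset_trans].
    by apply; apply: subsetDl.
  apply/bigcupP => -[f /sM]; rewrite mem_edges_in => /andP[_ /subsetP fS vf].
  by have := fS v vf; rewrite !inE eqxx.
case/andP=> /subsetP sM vM; apply/subsetP => f fM.
have := sM f fM; rewrite !mem_edges_in => /andP[-> fS] /=.
apply/subsetP => x xf; rewrite !inE (subsetP fS) // andbT.
by apply: contraNneq vM => <-; apply/bigcupP; exists f.
Qed.

Lemma matching_in_partner (S : {set T}) v (M : {set {set T}}) :
  matching_in e S M -> v \in cover M ->
  exists u0, forall u, [&& u \in S, e v u & [set v; u] \in M] = (u == u0).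
Proof.
case/andP=> /subsetP sM /trivIsetP tM /bigcupP[f fM vf].
have := sM f fM; rewrite mem_edges_in => /andP[ef fS].
have [u0 evu0 fE] : exists2 u0, e v u0 & f = [set v; u0].
  case/edgesP: ef vf => x [y [exy ->]] /set2P[->|->]; first by exists y.
  by exists x; rewrite 1?e_sym // setUC.
exists u0 => u; apply/idP/eqP => [/and3P[uS evu fuM] | ->].
  have eqf : [set v; u] = f.
    apply/eqP; apply: contraT => neq; have := tM _ _ fuM fM neq.
    by move/disjointFr => /(_ v); rewrite vf !inE eqxx => /(_ isT).
  have : u \in f by rewrite -eqf !inE eqxx orbT.
  by rewrite fE => /set2P[uv|//]; move: evu; rewrite uv e_irr.
by rewrite evu0 -fE fM (subsetP fS) // fE !inE eqxx orbT.
Qed.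

Lemma matching_in_setU1 (S : {set T}) v u (M : {set {set T}}) :
  v \in S -> u \in S -> e v u -> [set v; u] \notin M ->
  matching_in e S ([set v; u] |: M) = matching_in e (S :\ v :\ u) M.
Proof.
move=> vS uS evu fM; set f := [set v; u].
have fE : f \in edges e by apply/edgesP; exists v, u.
have disj_f (g : {set T}) : g \subset S :\ v :\ u -> [disjoint f & g].
  move=> /subsetP gS; rewrite -setI_eq0; apply/eqP/setP => x; rewrite !inE.
  by apply/negbTE/andP => -[/orP[]/eqP-> /gS]; rewrite !inE eqxx ?andbF.
apply/idP/idP.
  case/andP=> /subsetP sM tM; apply/andP; split; last first.
    by apply: trivIsetS tM; apply: subsetUr.
  apply/subsetP => g gM; have gfM : g \in f |: M by rewrite inE gM orbT.
  have := sM g gfM; rewrite !mem_edges_in => /andP[-> gS] /=.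
  have fg : f != g by apply: contraNneq fM => fg; rewrite -/f fg.
  have dfg := trivIsetP tM _ _ (setU11 _ _) gfM fg.
  apply/subsetP => x xg; rewrite !inE (subsetP gS) // andbT.
  by apply/andP; split; apply: contraTneq xg => ->;
    rewrite (disjointFr dfg) // !inE eqxx ?orbT.
case/andP=> /subsetP sM tM; apply/andP; split.
  apply/subsetP => g /setU1P[->|/sM].
    by rewrite mem_edges_in fE subUset !sub1set vS uS.
  rewrite !mem_edges_in => /andP[-> /subset_trans]; apply.
  by apply/subsetP => x; rewrite !inE => /and3P[].
apply: trivIsetU; rewrite ?trivIset1 // cover1.
by apply: bigcup_disjoint => g /sM; rewrite mem_edges_in => /andP[_ /disj_f].
Qed.

Variables (R : rcfType) (w : {set T} -> R[i]).

Let mu_term (S : {set T}) (M : {set {set T}}) : {poly R[i]} :=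
  ((-1) ^+ #|M| * `|\prod_(f in M) w f| ^+ 2) *: 'X^(#|S| - 2 * #|M|).

Lemma sum_matchings_through_edge (S : {set T}) v u :
  v \in S -> u \in S -> e v u ->
  \sum_(M | matching_in e S M && ([set v; u] \in M)) mu_term S M =
  - (`|w [set v; u]| ^+ 2 *: mu_w e w (S :\ v :\ u)).
Proof.
move=> vS uS evu; set f := [set v; u]; set S' := S :\ v :\ u.
have fS' M' : matching_in e S' M' -> f \notin M'.
  case/andP=> /subsetP sM _; apply/negP => /sM.
  rewrite mem_edges_in => /andP[_ /subsetP /(_ v (setU11 _ _))].
  by rewrite !inE eqxx andbF.
rewrite /mu_w scaler_sumr -sumrN.
rewrite (reindex_onto (fun M' => f |: M') (fun M => M :\ f)) /=; last first.
  by move=> M /andP[_ fM]; rewrite setD1K.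
rewrite [LHS](eq_bigl (matching_in e S')); last first.
  move=> M' /=; apply/idP/idP => [/andP[/andP[mM _] /eqP eqM'] | mM'].
    have fM' : f \notin M' by rewrite -eqM' setD11.
    by rewrite -(matching_in_setU1 vS uS evu fM').
  have fM' := fS' _ mM'.
  by rewrite (matching_in_setU1 vS uS evu fM') mM' setU11 setU1K // eqxx.
apply: eq_bigr => M' mM'; have fM' := fS' _ mM'.
have cS : #|S| = (#|S'|).+2.
  by rewrite (cardsD1 v S) vS (cardsD1 u (S :\ v)) !inE (neq_edge evu) uS.
rewrite /mu_term cardsU1 fM' big_setU1 //= normrM exprMn cS.
rewrite scalerA -scaleNr; congr (_ *: _); last by rewrite mulnS subSS.
by rewrite add1n exprS mulN1r mulNr mulrCA.
Qed.

Lemma mu_w_rec (S : {set T}) v : v \in S ->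
  mu_w e w S = 'X * mu_w e w (S :\ v) -
    \sum_(u in S | e v u) (`|w [set v; u]| ^+ 2 *: mu_w e w (S :\ v :\ u)).
Proof.
move=> vS; rewrite {1}/mu_w (bigID (fun M => v \in cover M)) /= addrC.
congr (_ + _).
  rewrite /mu_w mulr_sumr; apply: eq_big => M.
    by rewrite matching_in_setD1.
  rewrite -matching_in_setD1 // => /card_matching_in leMS.
  rewrite -scalerAr -exprS; congr (_ *: 'X^_).
  by rewrite (cardsD1 v S) vS add1n subSn.
rewrite (eq_bigr (fun M : {set {set T}} =>
    \sum_(u | [&& u \in S, e v u & [set v; u] \in M]) mu_term S M)); last first.
  move=> M /andP[mM /(matching_in_partner mM)[u0 Hu0]].
  by rewrite (big_pred1 u0).
rewrite (exchange_big_dep (fun u => (u \in S) && e v u)) /=; last first.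
  by move=> M u _ /and3P[-> ->].
rewrite -sumrN; apply: eq_bigr => u /andP[uS evu].
rewrite -sum_matchings_through_edge //; apply: eq_bigl => M; rewrite uS evu /=.
apply/idP/idP => [/andP[/andP[-> _] ->] // | /andP[mM fM]].
by rewrite mM fM andbT; apply/bigcupP; exists [set v; u]; rewrite // setU11.
Qed.

Lemma mu_w_set0 : mu_w e w set0 = 1.
Proof.
rewrite /mu_w (big_pred1 set0); last first.
  move=> M; apply/idP/eqP => [/card_matching_in | ->].
    by rewrite cards0 leqn0 muln_eq0 /= cards_eq0 => /eqP.
  by rewrite /matching_in sub0set; apply/trivIsetP => A B; rewrite inE.
by rewrite !cards0 big_set0 normr1 expr1n mulr1 expr0 scale1r.
Qed.

End MatchingPolynomial.

Definition matching_recurrence (K : pzRingType) (T : finType) (e : rel T)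
    (y : K) (lam : T -> T -> K) (F : {set T} -> K) : Prop :=
  F set0 = 1 /\ forall (S : {set T}) v, v \in S ->
    F S = y * F (S :\ v) - \sum_(u in S | e v u) lam v u * F (S :\ v :\ u).

Lemma matching_recurrence_sign (K : comPzRingType) (T : finType) (e : rel T)
    (y : K) (lam : T -> T -> K) (F : {set T} -> K) :
  irreflexive e -> matching_recurrence e y lam F ->
  matching_recurrence e (- y) lam (fun S => (-1) ^+ #|S| * F S).
Proof.
move=> e_irr [F0 Frec]; split=> [|S v vS]; first by rewrite cards0 mul1r.
have cS : #|S| = (#|S :\ v|).+1 by rewrite (cardsD1 v S) vS.
rewrite (Frec _ _ vS) mulrBr mulr_sumr cS exprS; congr (_ - _); first by ring.
apply: eq_bigr => u /andP[uS evu].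
have cS1 : #|S :\ v| = (#|S :\ v :\ u|).+1.
  by rewrite (cardsD1 u (S :\ v)) !inE uS (neq_edge e_irr evu).
by rewrite cS1 exprS; ring.
Qed.

Section ComplexRecurrence.
Variables (R : rcfType) (T : finType) (e : rel T).
Hypothesis e_irr : irreflexive e.
Local Notation Re := (@complex.Re R).
Local Notation Im := (@complex.Im R).

Lemma Re_realM (x : R) (y : R[i]) : Re (x%:C * y) = x * Re y.
Proof. by case: y => a b /=; rewrite mul0r subr0. Qed.

Lemma Im_realM (x : R) (y : R[i]) : Im (x%:C * y) = x * Im y.
Proof. by case: y => a b /=; rewrite mul0r addr0. Qed.

Lemma Im_invc (y : R[i]) : Im y^-1 = - Im y / (Re y ^+ 2 + Im y ^+ 2).
Proof. by case: y => a b /=; rewrite mulNr. Qed.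

Lemma Im_invc_le0 (t : R) (y : R[i]) : 0 <= t * Im y -> t * Im y^-1 <= 0.
Proof.
move=> h; rewrite Im_invc mulrA mulrN mulNr oppr_le0 divr_ge0 //.
by rewrite addr_ge0 ?sqr_ge0.
Qed.

Lemma matching_recurrence_Re (r : R) (lam : T -> T -> R)
    (F : {set T} -> R[i]) :
  matching_recurrence e r%:C (fun v u => (lam v u)%:C) F ->
  matching_recurrence e r lam (fun S => Re (F S)).
Proof.
case=> F0 Frec; split=> [|S v vS]; first by rewrite F0.
rewrite (Frec _ _ vS) raddfB /= Re_realM raddf_sum /=; congr (_ - _).
by apply: eq_bigr => u _; rewrite Re_realM.
Qed.

Lemma matching_recurrence_neq0 (z : R[i]) (lam : T -> T -> R)
    (F : {set T} -> R[i]) :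
  Im z != 0 -> (forall v u, 0 <= lam v u) ->
  matching_recurrence e z (fun v u => (lam v u)%:C) F -> forall S, F S != 0.
Proof.
move=> Imz lam_ge0 [F0 Frec].
suff ratio_Im S : F S != 0 /\
    forall v, v \in S -> Im z ^+ 2 <= Im z * Im (F S / F (S :\ v)).
  by move=> S; case: (ratio_Im S).
have [n] := ubnP #|S|; elim: n S => // n IH S ltSn.
have ratio v : v \in S -> F (S :\ v) != 0 /\
    Im z ^+ 2 <= Im z * Im (F S / F (S :\ v)).
  move=> vS; set S1 := S :\ v.
  have ltS1 : (#|S1| < n)%N by move: ltSn; rewrite (cardsD1 v S) vS.
  have [F1_neq0 IH1] := IH S1 ltS1.
  split=> //.
  have -> : F S / F S1 =
      z - \sum_(u in S | e v u) (lam v u)%:C * (F S1 / F (S1 :\ u))^-1.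
    rewrite (Frec _ _ vS) mulrBl mulfK // mulr_suml; congr (_ - _).
    by apply: eq_bigr => u _; rewrite invf_div mulrA.
  rewrite raddfB raddf_sum /= mulrBr -expr2 lerDl oppr_ge0 mulr_sumr.
  apply: sumr_le0 => u /andP[uS evu].
  have uS1 : u \in S1 by rewrite !inE uS (neq_edge e_irr evu).
  rewrite Im_realM mulrCA; apply: mulr_ge0_le0; first exact: lam_ge0.
  by apply: Im_invc_le0; apply: le_trans (IH1 _ uS1); apply: sqr_ge0.
case: (set_0Vmem S) => [->|[v vS]].
  by rewrite F0 oner_eq0; split => // v; rewrite inE.
split; last by move=> u /ratio[].
have [_ ratio_v] := ratio v vS.
apply: contraTneq ratio_v => ->; rewrite mul0r raddf0 mulr0 -ltNge.
by rewrite exprn_even_gt0.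
Qed.

End ComplexRecurrence.

Section PositiveRecurrence.
Variables (R : realFieldType) (T : finType) (e : rel T).
Hypotheses (e_sym : symmetric e) (e_irr : irreflexive e).
Variables (D : nat) (b c : R) (lam : T -> T -> R).
Hypotheses (D_ge2 : (2 <= D)%N) (deg_le : forall v, (deg e v <= D)%N).
Hypotheses (c_gt0 : 0 < c) (c_sqr : c ^+ 2 = (D%:R - 1) * b ^+ 2).
Hypothesis lam_bound : forall v u, e v u -> 0 <= lam v u <= b ^+ 2.

Local Notation nbhd S v := [set u in S | e v u].

Lemma card_nbhd_le (S : {set T}) v : (#|nbhd S v| <= D)%N.
Proof.
apply: leq_trans (deg_le v); apply: subset_leq_card.
by apply/subsetP => u; rewrite !inE => /andP[].
Qed.

Lemma card_nbhd_setD1_lt (S : {set T}) v u : v \in S -> e u v ->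
  (#|nbhd (S :\ v) u| < D)%N.
Proof.
move=> vS euv; have := card_nbhd_le S u.
rewrite (cardsD1 v (nbhd S u)) inE vS euv add1n.
suff -> : nbhd (S :\ v) u = nbhd S u :\ v by [].
by apply/setP => t; rewrite !inE andbA.
Qed.

Section Ratio.
Variables (y : R) (G : {set T} -> R).
Hypotheses (Grec : matching_recurrence e y lam G) (y_gt : 2 * c < y).

Let ratio_bound (S : {set T}) := 0 < G S /\
  forall v, v \in S -> (#|nbhd S v| < D)%N -> c * G (S :\ v) <= G S.

Lemma matching_recurrence_step (S : {set T}) v : v \in S ->
  (forall S' : {set T}, (#|S'| < #|S|)%N -> ratio_bound S') ->
  (c * y - #|nbhd S v|%:R * b ^+ 2) * G (S :\ v) <= c * G S.
Proof.
move=> vS IH; set S1 := S :\ v.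
have ltS1 : (#|S1| < #|S|)%N by rewrite (cardsD1 v S) vS.
have [G1_gt0 ratio1] := IH S1 ltS1.
have sum_le : c * \sum_(u in S | e v u) lam v u * G (S1 :\ u) <=
    #|nbhd S v|%:R * b ^+ 2 * G S1.
  rewrite mulr_sumr -mulrA mulr_natl -sumr_const.
  rewrite [X in _ <= X](eq_bigl (fun u => (u \in S) && e v u)); last first.
    by move=> u; rewrite inE.
  apply: ler_sum => u /andP[uS evu].
  have uS1 : u \in S1 by rewrite !inE uS (neq_edge e_irr evu).
  have := ratio1 u uS1 (card_nbhd_setD1_lt vS _); rewrite e_sym => /(_ evu).
  have [lam_ge0 lam_le] := andP (lam_bound evu).
  nra.
case: Grec => _ /(_ S v vS) ->; move: sum_le; rewrite -/S1; nra.
Qed.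

Lemma matching_recurrence_ratio_bound (S : {set T}) : ratio_bound S.
Proof.
have [n] := ubnP #|S|; elim: n S => // n IH S ltSn.
have IHS (S' : {set T}) : (#|S'| < #|S|)%N -> ratio_bound S'.
  by move=> ltS'; apply: IH; apply: leq_trans ltS' _; rewrite -ltnS.
have [->|[v vS]] := set_0Vmem S.
  by case: Grec => G0 _; split=> [|v]; rewrite ?G0 ?ltr01 ?inE.
have G1_gt0 u : u \in S -> 0 < G (S :\ u).
  by move=> uS; case: (IHS (S :\ u)) => //; rewrite (cardsD1 u S) uS.
have step u : u \in S ->
    (c * y - #|nbhd S u|%:R * b ^+ 2) * G (S :\ u) <= c * G S.
  by move=> uS; apply: matching_recurrence_step.
have b2_ge0 : 0 <= b ^+ 2 := sqr_ge0 b.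
have D_ge2R : 2 <= D%:R :> R by rewrite (ler_nat R 2).
have cy_gt : 2 * c ^+ 2 < c * y by rewrite expr2 mulrCA ltr_pM2l.
have b2_le : 2 * b ^+ 2 <= D%:R * b ^+ 2 by rewrite ler_wpM2r.
split=> [|u uS ltD].
  have kb : #|nbhd S v|%:R * b ^+ 2 <= D%:R * b ^+ 2.
    by rewrite ler_wpM2r // ler_nat card_nbhd_le.
  have coef_gt0 : 0 < c * y - #|nbhd S v|%:R * b ^+ 2.
    by move: cy_gt b2_le kb; rewrite c_sqr; lra.
  have := lt_le_trans (mulr_gt0 coef_gt0 (G1_gt0 v vS)) (step v vS).
  by rewrite pmulr_rgt0.
have kb : #|nbhd S u|%:R * b ^+ 2 <= (D%:R - 1) * b ^+ 2.
  by rewrite ler_wpM2r // lerBrDr natr1 ler_nat.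
have coef_ge : c ^+ 2 <= c * y - #|nbhd S u|%:R * b ^+ 2.
  by move: cy_gt kb; rewrite c_sqr; lra.
rewrite -(ler_pM2l c_gt0) mulrA -expr2; apply: le_trans (step u uS).
by rewrite ler_wpM2r // ltW // G1_gt0.
Qed.

Lemma matching_recurrence_gt0 (S : {set T}) : 0 < G S.
Proof. by case: (matching_recurrence_ratio_bound S). Qed.

End Ratio.

Lemma matching_recurrence_root_bound y (G : {set T} -> R) :
  matching_recurrence e y lam G -> forall S, G S = 0 -> `|y| <= 2 * c.
Proof.
move=> Grec S GS0; rewrite ler_norml; apply/andP; split; rewrite leNgt.
  apply/negP => y_lt; have y_gt : 2 * c < - y by rewrite ltrNr.
  have := matching_recurrence_gt0 (matching_recurrence_sign e_irr Grec) y_gt S.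
  by rewrite GS0 mulr0 ltxx.
apply/negP => y_gt; have := matching_recurrence_gt0 Grec y_gt S.
by rewrite GS0 ltxx.
Qed.

End PositiveRecurrence.

Section WeightedGraph.
Variables (R : rcfType) (T : finType) (e : rel T) (w : {set T} -> R[i]).

Lemma mu_w_horner_recurrence (z : R[i]) :
  symmetric e -> irreflexive e ->
  matching_recurrence e z (fun v u => ((Normc.normc (w [set v; u])) ^+ 2)%:C)
    (fun S => (mu_w e w S).[z]).
Proof.
move=> e_sym e_irr; split=> [|S v vS]; first by rewrite mu_w_set0 // hornerC.
rewrite (mu_w_rec e_sym e_irr w vS) hornerD hornerN hornerM hornerX.
congr (_ - _); rewrite horner_sum; apply: eq_bigr => u _.
by rewrite hornerZ rmorphXn.
Qed.

Lemma eta_w_w1_eq0 (w1 : T -> R[i]) :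
  (forall u, w1 u = 0) -> eta_w e w w1 = mu_w e w setT.
Proof.
move=> w1_0; rewrite /eta_w (bigD1 setT) //= setCT cards0 big_set0 expr0.
rewrite mulr1 scale1r big1 ?addr0 // => S /eqP nS.
have [CS0|[x xS]] := set_0Vmem (~: S).
  by move: nS; rewrite -(setCK S) CS0 setC0.
by rewrite (bigD1 x) //= w1_0 mul0r mulr0 scale0r.
Qed.

Lemma normc_ge0 (x : R[i]) : 0 <= Normc.normc x.
Proof. by case: x => a b; apply: sqrtr_ge0. Qed.

Lemma normc_le_b0 f : f \in edges e -> Normc.normc (w f) <= b0 e w.
Proof. exact: le_bigmax_cond. Qed.

Lemma normc_sqr_le_b0 f :
  f \in edges e -> Normc.normc (w f) ^+ 2 <= b0 e w ^+ 2.
Proof.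
move=> fE; have w_ge0 := normc_ge0 (w f).
apply: lerXn2r; rewrite ?nnegrE ?normc_le_b0 //.
exact: le_trans (normc_le_b0 fE).
Qed.

Lemma b0_gt0 : (forall f, f \in edges e -> w f != 0) -> (0 < maxdeg e)%N ->
  0 < b0 e w.
Proof.
move=> w_nz; rewrite lt0n => maxdeg_neq0.
have [v] : exists v, (0 < deg e v)%N.
  apply/existsP; apply: contraNT maxdeg_neq0; rewrite negb_exists => /forallP h.
  by apply/eqP/eqP; rewrite -leqn0; apply/bigmax_leqP => v _; rewrite leqNgt h.
rewrite /deg card_gt0 => /set0Pn[u]; rewrite inE => evu.
have fE : [set v; u] \in edges e by apply/edgesP; exists v, u.
apply: lt_le_trans (normc_le_b0 fE); rewrite lt_def normc_ge0 andbT.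
by apply: contra (w_nz _ fE) => /eqP/Normc.eq0_normc/eqP.
Qed.

End WeightedGraph.

Theorem corollary3p5 (R : realType) (T : finType) (e : rel T)
  (e_sym : symmetric e) (e_irr : irreflexive e)
  (w : {set T} -> R[i]) (w_nz : forall f, f \in edges e -> w f != 0)
  (w1 : T -> R[i]) (w1_0 : forall u, w1 u = 0)
  (hD : (1 < maxdeg e)%N) :
  forall z : R[i], root (eta_w e w w1) z ->
    exists r : R, z = (r%:C)%C /\
      - (2 * b0 e w * Num.sqrt ((maxdeg e)%:R - 1)) <= r /\
      r <= 2 * b0 e w * Num.sqrt ((maxdeg e)%:R - 1).
Proof.
move=> z; rewrite eta_w_w1_eq0 // rootE => /eqP mu_z.
set lam := fun v u => Normc.normc (w [set v; u]) ^+ 2.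
have lam_ge0 v u : 0 <= lam v u := sqr_ge0 _.
have rec_z := mu_w_horner_recurrence w z e_sym e_irr.
have Im_z : complex.Im z = 0.
  apply/eqP; apply: contraT => Im_z.
  have := matching_recurrence_neq0 e_irr Im_z lam_ge0 rec_z setT.
  by rewrite mu_z eqxx.
have [r z_real] : exists r, z = r%:C.
  by exists (complex.Re z); case: z Im_z {mu_z rec_z} => a b /= ->.
rewrite z_real in rec_z mu_z; exists r; split=> //.
set D := maxdeg e in hD *; set b := b0 e w; set s := Num.sqrt (D%:R - 1).
have s_gt0 : 0 < s by rewrite sqrtr_gt0 subr_gt0 ltr1n.
have c_gt0 : 0 < b * s by rewrite mulr_gt0 ?b0_gt0 // ltnW.
have c_sqr : (b * s) ^+ 2 = (D%:R - 1) * b ^+ 2.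
  by rewrite exprMn sqr_sqrtr 1?mulrC // subr_ge0 ler1n ltnW.
have lam_le v u : e v u -> 0 <= lam v u <= b ^+ 2.
  by move=> evu; rewrite lam_ge0 normc_sqr_le_b0 //; apply/edgesP; exists v, u.
have := matching_recurrence_root_bound e_sym e_irr hD (@leq_bigmax _ _) c_gt0
  c_sqr lam_le (matching_recurrence_Re rec_z) (congr1 (@complex.Re R) mu_z).
by rewrite -mulrA ler_norml => /andP.
Qed.
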